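(* Let $d_{in}, d_V, p, M$ be positive integers and $d_K$ an even positive integer. Fix weights $W_Q, W_K\in\mathbb{R}^{d_{in}\times d_K}$, $W_V\in\mathbb{R}^{d_{in}\times d_V}$, a feature map $\phi:\mathbb{R}^{d_K}\to\mathbb{R}^{d_K}$, a map $D_1:\mathbb{R}^{d_K}\to\mathbb{R}^{p}$, and a map $D_2$ assigning to every finite sequence of tokens (rows in $\mathbb{R}^{d_{in}}$) a vector in $\mathbb{R}^{p}$, such that there is a map $D_2^{*}$ on finite token sequences with $D_2([A;B]) - D_2(B) = D_2^{*}(A)$ for all finite token sequences $A, B$. For a token sequence $Y = [Y_1,\dots,Y_n]^T\in\mathbb{R}^{n\times d_{in}}$, bias matrix $b_{KV}\in\mathbb{R}^{d_K\times d_V}$ and bias vector $b_D\in\mathbb{R}^p$, define $Q_i = Y_iW_Q$, $K_i = Y_iW_K$, $V_i = Y_iW_V$ (viewed as column vectors) and, for $1\le i\le n$, the output at position $i$ by $$O_i(Y,b_{KV},b_D)^{T} = \frac{\big(R^{d_K}_{\Theta,i}\phi(Q_i)\big)^{T}\Big[\sum_{j=1}^{i}R^{d_K}_{\Theta,j}\phi(K_j)V_j^{T} + b_{KV}\Big]}{D_1(Q_i)^{T}\big(D_2([Y_1,\dots,Y_i]^T) + b_D\big)},$$ assuming the denominators are nonzero. Let $X' = [X'_1,\dots,X'_M]^T\in\mathbb{R}^{M\times d_{in}}$ be a fixed in-context prompt with $K'_j = X'_jW_K$, $V'_j = X'_jW_V$, and set $$b'_{KV} = R^{d_K}_{\Theta,-M}\,b_{KV}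 + \sum_{j=1}^{M}R^{d_K}_{\Theta,j-M}\,\phi(K'_j)V'^{T}_j,\qquad b'_D = b_D + D_2^{*}(X').$$ Then for every $N\ge1$, every $X = [X_1,\dots,X_N]^T\in\mathbb{R}^{N\times d_{in}}$ and every $1\le i\le N$, $$O_{M+i}([X';X],b_{KV},b_D) = O_i(X,b'_{KV},b'_D),$$ where $[X';X] = [X'_1,\dots,X'_M,X_1,\dots,X_N]^T$.
   Context: Rotary matrix: for $\Theta = \{\theta_k = 10000^{-2(k-1)/d_K} : k = 1,\dots,d_K/2\}$ and an integer $m$, $R^{d_K}_{\Theta,m}$ is the $d_K\times d_K$ block-diagonal matrix whose $k$-th $2\times 2$ diagonal block is $\begin{pmatrix}\cos m\theta_k & -\sin m\theta_k\\ \sin m\theta_k & \cos m\theta_k\end{pmatrix}$. The defined $O_i$ is a causally masked (autoregressive) linearized attention layer with rotary positional encoding, augmented with a Key-Value bias $b_{KV}$ added to the Key-Value sum and a bias $b_D$ added to the normalizing term. The separation property of $D_2$ is the paper's standing assumption for this result (it holds e.g. for $D_2\equiv 1$ with $D_1\equiv1$, and for $D_2(Y)=\sum_j\phi(Y_jW_K)$ with $D_1=\phi$). *)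

From HB Require Import structures.
From mathcomp Require Import all_boot all_order all_algebra.
From mathcomp Require Import all_classical all_reals all_analysis.
Set Implicit Arguments. Unset Strict Implicit. Unset Printing Implicit Defensive.
Import Order.TTheory GRing.Theory Num.Theory.
Local Open Scope ring_scope.

Section Rope.
Variable R : realType.

(* d_K = 2 * h.  theta k (0-based k = paper's k-1) = 10000^(-2k/d_K). *)
Definition rope_theta (h : nat) (k : nat) : R :=
  10000 `^ (- ((2 * k)%:R / (2 * h)%:R)).

(* Rotary matrix R^{d_K}_{Theta,m}, d_K = (2*h)%N, block-diagonal with
   2x2 blocks [[cos m th_k, - sin m th_k]; [sin m th_k, cos m th_k]]. *)
Definition rotary (h : nat) (m : int) : 'M[R]_(2 * h) :=
  \matrix_(a, b)
    (if (a %/ 2 == b %/ 2)%N then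
       let t := m%:~R * rope_theta h (a %/ 2) in
       match odd a, odd b with
       | false, false => cos t
       | false, true  => - sin t
       | true, false  => sin t
       | true, true   => cos t
       end
     else 0).

Definition tokens (n din : nat) (Y : 'M[R]_(n, din)) : seq 'rV[R]_din :=
  [seq row j Y | j <- enum 'I_n].

(* Linearized causal attention with RoPE and biases; returns O_i (a column
   vector of size dV); i : 'I_n is 0-based, paper position i.+1. *)
Definition attn_out (din h dV p : nat)
    (WQ WK : 'M[R]_(din, 2 * h)) (WV : 'M[R]_(din, dV))
    (phi : 'cV[R]_(2 * h) -> 'cV[R]_(2 * h))
    (D1 : 'cV[R]_(2 * h) -> 'cV[R]_p)
    (D2 : seq 'rV[R]_din -> 'cV[R]_p)
    (n : nat) (Y : 'M[R]_(n, din)) (bKV : 'M[R]_(2 * h, dV)) (bD : 'cV[R]_p)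
    (i : 'I_n) : 'cV[R]_dV :=
  let Q := fun j : 'I_n => (row j Y *m WQ)^T in
  let K := fun j : 'I_n => (row j Y *m WK)^T in
  let V := fun j : 'I_n => (row j Y *m WV)^T in
  let num : 'M[R]_(1, dV) :=
    (rotary h (i.+1)%:Z *m phi (Q i))^T *m
      (\sum_(j < n | (j <= i)%N) rotary h (j.+1)%:Z *m phi (K j) *m (V j)^T
       + bKV) in
  let den : R :=
    ((D1 (Q i))^T *m (D2 (take i.+1 (tokens Y)) + bD)) 0 0 in
  (den^-1 *: num)^T.

End Rope.
Arguments rotary {R} h m.
Arguments rope_theta {R} h k.

(* The rotary matrices form a one-parameter group: R_m R_n = R_(m+n) and
   R_m^T = R_(-m), each 2x2 block being a plane rotation by m theta_k.  So the
   query rotation at position M+i factors as R_i R_M, and pushing R_(-M) into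
   the causal key-value sum of [X'; X] shifts every position by -M: the prompt
   terms together with R_(-M) b_KV become the new bias b'_KV, while the
   remaining terms are those of X at their own positions.  In the normaliser,
   the separation property of D_2 moves the prompt's contribution into b'_D. *)

From HB Require Import structures.
From mathcomp Require Import all_boot all_order all_algebra.
From mathcomp Require Import all_classical all_reals all_analysis.
From mathcomp Require Import zify ring.
Set Implicit Arguments. Unset Strict Implicit. Unset Printing Implicit Defensive.
Import Order.TTheory GRing.Theory Num.Theory.
Local Open Scope ring_scope.

Lemma sum_half_eq (V : nmodType) n k (F : nat -> V) : (k.*2.+1 < n)%N ->
  \sum_(b < n) (if (b %/ 2 == k)%N then F b else 0) = F k.*2 + F k.*2.+1.
Proof.
move=> kn.
rewrite -(big_mkord xpredT (fun b => if (b %/ 2 == k)%N then F b else 0)).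
have off_half m p : (forall b, m <= b < p -> b %/ 2 != k)%N ->
    \sum_(m <= b < p) (if (b %/ 2 == k)%N then F b else 0) = 0.
  move=> off; rewrite big_nat_cond big1 // => b /andP[/off].
  by move/negPf ->.
rewrite (@big_cat_nat _ _ _ k.*2) //=; last lia.
rewrite off_half ?add0r => [|b]; last lia.
rewrite big_ltn; last lia.
rewrite big_ltn; last lia.
rewrite off_half ?addr0; last lia.
have -> : (k.*2 %/ 2 = k)%N by lia.
have -> : (k.*2.+1 %/ 2 = k)%N by lia.
by rewrite eqxx.
Qed.

Section Rotation.
Variable R : realType.

Definition rotation_entry (t : R) (x y : bool) : R :=
  match x, y with
  | false, false => cos t
  | false, true  => - sin t
  | true, false  => sin t
  | true, true   => cos t
  end.

Lemma rotation_entryN t x y : rotation_entry (- t) x y = rotation_entry t y x.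
Proof. by case: x; case: y; rewrite /= ?cosN ?sinN ?opprK. Qed.

Lemma rotation_entryD s t x y :
  rotation_entry (s + t) x y =
  rotation_entry s x false * rotation_entry t false y
  + rotation_entry s x true * rotation_entry t true y.
Proof. by case: x; case: y; rewrite /= ?cosD ?sinD; ring. Qed.

Lemma rotaryE h (m : int) (a b : 'I_(2 * h)) :
  rotary h m a b =
  if (a %/ 2 == b %/ 2)%N
  then rotation_entry (m%:~R * rope_theta h (a %/ 2)) (odd a) (odd b) else 0.
Proof. by rewrite mxE. Qed.

Lemma trmx_rotary h (m : int) : (@rotary R h m)^T = rotary h (- m).
Proof.
apply/matrixP => a b; rewrite mxE !rotaryE eq_sym.
by case: eqP => // ->; rewrite rmorphN mulNr rotation_entryN.
Qed.

Lemma rotaryD h (m n : int) : @rotary R h (m + n) = rotary h m *m rotary h n.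
Proof.
apply/matrixP => a c; rewrite rotaryE mxE.
set k := (a %/ 2)%N; set th := rope_theta h k.
pose F b := rotation_entry (m%:~R * th) (odd a) (odd b)
  * (if (k == c %/ 2)%N then rotation_entry (n%:~R * th) (odd b) (odd c) else 0).
rewrite (eq_bigr (fun b : 'I__ => if (b %/ 2 == k)%N then F b else 0)); last first.
  move=> b _; rewrite !rotaryE /F -/k -/th eq_sym.
  by case: eqP => [->|_]; rewrite ?mul0r.
rewrite sum_half_eq /F; last by have := ltn_ord a; rewrite /k; lia.
rewrite odd_double /= odd_double.
case: eqP => _; last by rewrite !mulr0 addr0.
by rewrite rmorphD mulrDl rotation_entryD.
Qed.
End Rotation.

Lemma big_cat_seq1 (I T : Type) (r : seq I) (F : I -> T) :
  \big[cat/[::]]_(i <- r) [:: F i] = map F r.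
Proof. by elim: r => [|x r IH]; rewrite ?big_nil ?big_cons ?IH. Qed.

Lemma map_enum_ord_add (T : Type) m n (F : 'I_(m + n) -> T) :
  [seq F j | j <- enum 'I_(m + n)] =
  [seq F (lshift n j) | j <- enum 'I_m] ++ [seq F (rshift m j) | j <- enum 'I_n].
Proof.
have bigE k (G : 'I_k -> T) :
    [seq G j | j <- enum 'I_k] = \big[cat/[::]]_(j < k) [:: G j].
  by rewrite big_cat_seq1 enumT.
by rewrite !bigE big_split_ord.
Qed.

Section Tokens.
Variables (R : realType) (d : nat).

Lemma size_tokens n (Y : 'M[R]_(n, d)) : size (tokens Y) = n.
Proof. by rewrite size_map size_enum_ord. Qed.

Lemma tokens_col_mx m n (A : 'M[R]_(m, d)) (B : 'M[R]_(n, d)) :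
  tokens (col_mx A B) = tokens A ++ tokens B.
Proof.
rewrite /tokens map_enum_ord_add.
by congr (_ ++ _); apply: eq_map => j; rewrite (rowKu, rowKd).
Qed.

Lemma take_tokens_col_mx m n (A : 'M[R]_(m, d)) (B : 'M[R]_(n, d)) k :
  take (m + k) (tokens (col_mx A B)) = tokens A ++ take k (tokens B).
Proof. by rewrite tokens_col_mx take_cat size_tokens ltnNge leq_addr addKn. Qed.

End Tokens.

Section CausalSum.
Variables (R : realType) (h d r dV : nat).

Lemma rotary_causal_sum_col_mx m n (A : 'M[R]_(m, d)) (B : 'M[R]_(n, d))
    (K : 'rV[R]_d -> 'M[R]_(2 * h, r)) (V : 'rV[R]_d -> 'M[R]_(r, dV))
    (b : 'M[R]_(2 * h, dV)) (i : 'I_n) :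
  let C := col_mx A B in
  rotary h (- m%:Z) *m
    (\sum_(j < m + n | (j <= m + i)%N)
       rotary h j.+1%:Z *m K (row j C) *m V (row j C) + b)
  = \sum_(j < n | (j <= i)%N) rotary h j.+1%:Z *m K (row j B) *m V (row j B)
    + (rotary h (- m%:Z) *m b
       + \sum_(j < m) rotary h (j.+1%:Z - m%:Z) *m K (row j A) *m V (row j A)).
Proof.
move=> C; rewrite mulmxDr mulmx_sumr big_split_ord /=.
have -> : \sum_(j < m | (lshift n j <= m + i)%N)
      rotary h (- m%:Z) *m (rotary h j.+1%:Z *m K (row (lshift n j) C)
                            *m V (row (lshift n j) C))
    = \sum_(j < m) rotary h (j.+1%:Z - m%:Z) *m K (row j A) *m V (row j A).
  rewrite (eq_bigl xpredT) => [|j]; last by rewrite /= ltnW // ltn_addr.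
  by apply: eq_bigr => j _; rewrite rowKu !mulmxA -rotaryD addrC.
have -> : \sum_(j < n | (m + j <= m + i)%N)
      rotary h (- m%:Z) *m (rotary h (m + j).+1%:Z *m K (row (rshift m j) C)
                            *m V (row (rshift m j) C))
    = \sum_(j < n | (j <= i)%N) rotary h j.+1%:Z *m K (row j B) *m V (row j B).
  apply: eq_big => [j|j _]; first by rewrite /= leq_add2l.
  rewrite rowKd !mulmxA -rotaryD; congr (rotary _ _ *m _ *m _); lia.
by rewrite [X in X + _ = _]addrC -addrA [X in _ + X = _]addrC.
Qed.
End CausalSum.

Theorem theorem4p5 (R : realType) (din dV p M h : nat)
    (hdin : (0 < din)%N) (hdV : (0 < dV)%N) (hp : (0 < p)%N)
    (hM : (0 < M)%N) (hh : (0 < h)%N)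
    (WQ WK : 'M[R]_(din, 2 * h)) (WV : 'M[R]_(din, dV))
    (phi : 'cV[R]_(2 * h) -> 'cV[R]_(2 * h))
    (D1 : 'cV[R]_(2 * h) -> 'cV[R]_p)
    (D2 D2star : seq 'rV[R]_din -> 'cV[R]_p)
    (hsep : forall A B : seq 'rV[R]_din, D2 (A ++ B) - D2 B = D2star A)
    (bKV : 'M[R]_(2 * h, dV)) (bD : 'cV[R]_p)
    (X' : 'M[R]_(M, din)) :
  let bKV' : 'M[R]_(2 * h, dV) :=
    rotary h (- (M%:Z)) *m bKV
    + \sum_(j < M) rotary h ((j.+1)%:Z - M%:Z)
                   *m phi ((row j X' *m WK)^T) *m ((row j X' *m WV)^T)^T in
  let bD' : 'cV[R]_p := bD + D2star (tokens X') in
  forall (N : nat) (X : 'M[R]_(N, din)) (i : 'I_N),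
    attn_out WQ WK WV phi D1 D2 (col_mx X' X) bKV bD (rshift M i)
    = attn_out WQ WK WV phi D1 D2 X bKV' bD' i.
Proof.
move=> bKV' bD' N X i.
have sepE A B : D2 (A ++ B) = D2 B + D2star A by rewrite -(hsep A B) addrC subrK.
rewrite /attn_out /= rowKd -addnS take_tokens_col_mx sepE.
rewrite -addrA [D2star _ + _]addrC; congr ((_^-1 *: _)^T).
rewrite !trmx_mul !trmx_rotary.
have -> : @rotary R h (- (M + i.+1)%:Z) = rotary h (- i.+1%:Z) *m rotary h (- M%:Z).
  by rewrite -rotaryD; congr rotary; lia.
rewrite -!mulmxA; congr (_ *m (_ *m _)).
exact: (rotary_causal_sum_col_mx X' X (fun y => phi (y *m WK)^T)
                                      (fun y => ((y *m WV)^T)^T)).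
Qed.
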